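(* Let $A$ be a set of parameters of cardinality $n$ and let $N:A\times[0,1]\to A\times[0,1]$ be a fuzzy soft negation. Then $N$ has at most $n$ equilibrium points.
   Context: For pairs with the same first coordinate, $(a,x)\le(a,y)$ iff $x\le y$, and $(a,x)\ge(a,y)$ iff $x\ge y$. A fuzzy soft negation is a map $N:A\times[0,1]\to A\times[0,1]$ such that: (i) $N(a,1)=(a,0)$ and $N(a,0)=(a,1)$ for all $a\in A$; (ii) if $x\le y$ then $N(a,x)\ge N(a,y)$, for all $a\in A$, $x,y\in[0,1]$; (iii) $N(N(a,x))=(a,x)$ for all $a\in A$, $x\in[0,1]$. A point $(a,x)\in A\times[0,1]$ is an equilibrium point of $N$ if $N(a,x)=(a,x)$. *)

From HB Require Import structures.
From mathcomp Require Import all_boot all_order all_algebra.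
From mathcomp Require Import reals.
Set Implicit Arguments. Unset Strict Implicit. Unset Printing Implicit Defensive.
Import Order.TTheory GRing.Theory Num.Theory.
Local Open Scope ring_scope.

Definition unit_itv (R : realType) := {x : R | (0 <= x) && (x <= 1)}.

Lemma unit_itv0_proof (R : realType) : ((0 : R) <= 0) && ((0 : R) <= 1).
Proof. by rewrite lexx ler01. Qed.
Lemma unit_itv1_proof (R : realType) : ((0 : R) <= 1) && ((1 : R) <= 1).
Proof. by rewrite lexx ler01. Qed.

Definition itv0 (R : realType) : unit_itv R := exist _ 0 (unit_itv0_proof R).
Definition itv1 (R : realType) : unit_itv R := exist _ 1 (unit_itv1_proof R).

Definition soft_le (A : Type) (R : realType) (p q : A * unit_itv R) : Prop :=
  p.1 = q.1 /\ proj1_sig p.2 <= proj1_sig q.2.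

Definition fuzzy_soft_negation (A : Type) (R : realType)
    (N : A * unit_itv R -> A * unit_itv R) : Prop :=
  (forall a : A, N (a, itv1 R) = (a, itv0 R) /\ N (a, itv0 R) = (a, itv1 R)) /\
  (forall (a : A) (x y : unit_itv R),
      proj1_sig x <= proj1_sig y -> soft_le (N (a, y)) (N (a, x))) /\
  (forall (a : A) (x : unit_itv R), N (N (a, x)) = (a, x)).

Definition equilibrium_point (A : Type) (R : realType)
    (N : A * unit_itv R -> A * unit_itv R) (p : A * unit_itv R) : Prop :=
  N p = p.

From mathcomp Require Import all_boot all_order all_algebra.
From mathcomp Require Import reals.
Import Order.TTheory GRing.Theory Num.Theory.
Local Open Scope ring_scope.

(* Each parameter a carries at most one equilibrium point: if N fixes (a, x)
   and (a, y) with x <= y, antitonicity of N(a, _) gives y <= x.  So the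
   projection onto A is injective on equilibrium points. *)

Lemma uniq_size_le_card (T : eqType) (A : finType) (f : T -> A) (s : seq T) :
  {in s &, injective f} -> uniq s -> (size s <= #|A|)%N.
Proof.
move=> f_inj s_uniq; rewrite -(size_map f) -(card_uniqP _) ?max_card //.
by rewrite map_inj_in_uniq.
Qed.

Section EquilibriumPoints.

Context {A : Type} {R : realType} {N : A * unit_itv R -> A * unit_itv R}.

Hypothesis N_antitone : forall (a : A) (x y : unit_itv R),
  proj1_sig x <= proj1_sig y -> soft_le (N (a, y)) (N (a, x)).

Lemma equilibrium_point_le {a : A} {x y : unit_itv R} :
  equilibrium_point N (a, x) -> equilibrium_point N (a, y) ->
  proj1_sig x <= proj1_sig y -> proj1_sig y <= proj1_sig x.
Proof. by move=> Nx Ny /(N_antitone a)[_]; rewrite Nx Ny. Qed.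

Lemma eq_equilibrium_point {p q : A * unit_itv R} :
  equilibrium_point N p -> equilibrium_point N q -> p.1 = q.1 -> p = q.
Proof.
case: p q => [a x] [b y] Np Nq /= ab; subst b; congr pair; apply: val_inj.
have [xy | yx] := orP (le_total (proj1_sig x) (proj1_sig y)); apply/le_anti.
- by rewrite xy (equilibrium_point_le Np Nq).
- by rewrite yx (equilibrium_point_le Nq Np).
Qed.

End EquilibriumPoints.

Theorem theorem3p3 (A : finType) (R : realType) (n : nat)
    (N : A * unit_itv R -> A * unit_itv R) :
  #|A| = n -> fuzzy_soft_negation N ->
  forall s : seq (A * unit_itv R),
    uniq s -> (forall p, p \in s -> equilibrium_point N p) -> (size s <= n)%N.
Proof.
move=> <- [_ [N_antitone _]] s s_uniq s_eq.
apply: (@uniq_size_le_card _ _ fst) s_uniq => p q /s_eq Np /s_eq Nq.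
exact: (eq_equilibrium_point N_antitone Np Nq).
Qed.
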